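(* Let $Q$ be a function from a recursive subset of $\mathbb{N}^3$ to $\mathbb{N}$ such that $Q(n,k,s)\in B^n$ whenever defined, and let $r>1$. Then there exists a coloring function $c:\mathbb{N}\rightarrow r=\{0,\dots,r-1\}$, uniformly recursive in $Q$, such that for every $w\in\mathbb{Z}^+$ and every $n<\lambda(w)$, if $Q(n,\lambda(w),\mu(w))$ is defined then $c(w+Q(n,\lambda(w),\mu(w)))\equiv c(w)+1\pmod r$.
   Context: For $x=\sum_{i=0}^{k}2^{n_i}\in\mathbb{Z}^+$ with $n_0<\cdots<n_k$, set $\mu(x)=n_k$ and $\lambda(x)=n_0$. For each $n$, $B^n=\{x\in\mathbb{Z}^+:\mu(x)=n\}$. *)

From mathcomp Require Import all_boot.
Set Implicit Arguments.
Unset Strict Implicit.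
Unset Printing Implicit Defensive.

(* mu x = n_k : the exponent of the leading binary digit of x (x > 0),
   i.e. the largest n with 2^n <= x. *)
Definition bmu (x : nat) : nat := trunc_log 2 x.
(* lambda x = n_0 : the exponent of the lowest binary digit of x (x > 0),
   i.e. the 2-adic valuation of x. *)
Definition blambda (x : nat) : nat := logn 2 x.
Definition inB (n x : nat) : Prop := 0 < x /\ bmu x = n.

Inductive rterm : Type :=
| RZero
| RSucc
| RProj (i : nat)
| ROracle
| RComp (f : rterm) (gs : seq rterm)
| RPrec (f g : rterm)
| RMu (f : rterm).

Inductive eval (O : nat -> nat -> nat -> nat) : rterm -> seq nat -> nat -> Prop :=
| eZero v : eval O RZero v 0
| eSucc v : eval O RSucc v (nth 0 v 0).+1
| eProj i v : eval O (RProj i) v (nth 0 v i)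
| eOracle v : eval O ROracle v (O (nth 0 v 0) (nth 0 v 1) (nth 0 v 2))
| eComp f gs v ys y :
    evals O gs v ys -> eval O f ys y -> eval O (RComp f gs) v y
| ePrec0 f g v y : eval O f v y -> eval O (RPrec f g) (0 :: v) y
| ePrecS f g n v z y :
    eval O (RPrec f g) (n :: v) z -> eval O g (n :: z :: v) y ->
    eval O (RPrec f g) (n.+1 :: v) y
| eMu f v n :
    eval O f (n :: v) 0 ->
    (forall m, m < n -> exists k, eval O f (m :: v) k.+1) ->
    eval O (RMu f) v n
with evals (O : nat -> nat -> nat -> nat) : seq rterm -> seq nat -> seq nat -> Prop :=
| esNil v : evals O [::] v [::]
| esCons g gs v y ys : eval O g v y -> evals O gs v ys -> evals O (g :: gs) v (y :: ys).

Definition oracle_of (Q : nat -> nat -> nat -> option nat) : nat -> nat -> nat -> nat :=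
  fun n k s => if Q n k s is Some v then v.+1 else 0.

(* The domain of Q is a recursive subset of N^3 (computable without oracle). *)
Definition recursive_domain (Q : nat -> nat -> nat -> option nat) : Prop :=
  exists d : rterm, forall n k s,
    eval (fun _ _ _ => 0) d [:: n; k; s] (if Q n k s is Some _ then 1 else 0).

From mathcomp Require Import all_boot zify.
Set Implicit Arguments.
Unset Strict Implicit.
Unset Printing Implicit Defensive.

(* Fix s = mu(x).  For a set bit p of y that is not its leading bit, let
   rho_p(y) = Q(p, q, s), where q is the next set bit of y above p: if y = w + v
   along an edge with n = p, then q = lambda(w) and rho_p(y) = v.  Colour x by
     c(x) = sum over nonempty S in [0, s) of (-1)^(|S|+1) [rho_S(x) is defined]  mod r,
   where rho_S applies the rho_p, p in S, from the highest p down.  Splitting S at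
   its largest element gives c(x) = sum_(p < s) ([rho_p(x) defined] - c_p(rho_p(x))),
   with c_p the same sum over subsets of [0, p).  For x = w + v we have
   rho_p(x) = rho_p(w) when p > n, rho_n(x) = v while rho_n(w) is undefined, and for
   p < n rho_p(w) is undefined while rho_p(x) = rho_p(v); the terms p < n then add up
   to c_n(v) and cancel against p = n, leaving c(w + v) = c(w) + 1.  The colouring is a
   bounded sum over the 2^s masks of S, hence primitive recursive in the oracle. *)

Lemma odd_shr_addn_exp2 a m p : p < a -> odd ((m + 2 ^ a) %/ 2 ^ p) = odd (m %/ 2 ^ p).
Proof.
move=> lt_pa; have -> : 2 ^ a = 2 ^ (a - p) * 2 ^ p by rewrite -expnD subnK // ltnW.
rewrite divnDr ?dvdn_mull // mulnK ?expn_gt0 // oddD oddX /=.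
by rewrite subn_eq0 leqNgt lt_pa addbF.
Qed.

Lemma shr_addn_exp2 a m : m < 2 ^ a -> (m + 2 ^ a) %/ 2 ^ a = 1.
Proof. by move=> lt_m; rewrite divnDr // divnn expn_gt0 divn_small. Qed.

Lemma logn_addl_dvd p k a b :
  prime p -> p ^ k %| a -> 0 < b -> b < p ^ k -> logn p (a + b) = logn p b.
Proof.
move=> p_pr dv_a b_gt0 lt_b.
set e := logn p b.
have lt_ek : e < k.
  rewrite -(ltn_exp2l _ _ (prime_gt1 p_pr)).
  exact: leq_ltn_trans (dvdn_leq b_gt0 (pfactor_dvdnn p b)) lt_b.
have dv_a_le j : j <= k -> p ^ j %| a.
  by move=> le_jk; apply: dvdn_trans dv_a; rewrite dvdn_exp2l.
have ab_gt0 : 0 < a + b by rewrite addn_gt0 b_gt0 orbT.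
apply/eqP; rewrite eqn_leq -(pfactor_dvdn e p_pr ab_gt0).
rewrite dvdn_add ?pfactor_dvdnn ?dv_a_le ?(ltnW lt_ek) // andbT.
rewrite leqNgt -(pfactor_dvdn e.+1 p_pr ab_gt0) (dvdn_addr _ (dv_a_le _ lt_ek)).
by rewrite pfactor_dvdn // ltnn.
Qed.

(** * The colouring *)

Definition inner_bit (y p : nat) : bool := odd (y %/ 2 ^ p) && (0 < y %/ 2 ^ p.+1).
Definition next_bit (y p : nat) : nat := p.+1 + logn 2 (y %/ 2 ^ p.+1).

Fixpoint popcount (k m : nat) : nat := if k is k'.+1 then popcount k' m + odd (m %/ 2 ^ k') else 0.

Lemma popcount0 k : popcount k 0 = 0.
Proof. by elim: k => //= k ->; rewrite div0n. Qed.

Lemma popcount_addn_exp2 k m : m < 2 ^ k -> popcount k.+1 (m + 2 ^ k) = (popcount k m).+1.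
Proof.
move=> lt_m; rewrite /= shr_addn_exp2 // addn1; congr _.+1.
suff low j : j <= k -> popcount j (m + 2 ^ k) = popcount j m by exact: low.
by elim: j => //= j IHj lt_jk; rewrite IHj ?odd_shr_addn_exp2 // ltnW.
Qed.

Lemma popcount_low k m : m < 2 ^ k -> popcount k.+1 m = popcount k m.
Proof. by move=> lt_m; rewrite /= divn_small ?addn0. Qed.

Section Colouring.
Variables (O : nat -> nat -> nat -> nat) (r s : nat).

(* Partial values are coded as by [oracle_of]: 0 is undefined and v.+1 stands for v. *)
Definition step (p z : nat) : nat := inner_bit z.-1 p * O p (next_bit z.-1 p) s.
Definition step_if (p z m : nat) : nat := if odd (m %/ 2 ^ p) then step p z else z.
Fixpoint chase (k z m : nat) : nat := if k is k'.+1 then chase k' (step_if k' z m) m else z.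

(* [weight b] is (-1)^(b + 1) modulo r. *)
Definition weight (b : bool) : nat := if b then 1 else r.-1.
Definition signed_chases (k z : nat) : nat :=
  \sum_(0 <= m < 2 ^ k)
    if (0 < m) && (0 < chase k z m) then weight (odd (popcount k m)) else 0.
Definition cosigned_chases (k z : nat) : nat :=
  \sum_(0 <= m < 2 ^ k) if 0 < chase k z m then weight (~~ odd (popcount k m)) else 0.

Lemma step0 p : step p 0 = 0.
Proof. by rewrite /step /inner_bit div0n. Qed.

Lemma chase0 k m : chase k 0 m = 0.
Proof. by elim: k => //= k IHk; rewrite /step_if; case: ifP; rewrite ?step0. Qed.

Lemma chase_set0 k z : chase k z 0 = z.
Proof. by elim: k z => //= k IHk z; rewrite /step_if div0n. Qed.

Lemma chase_addn_exp2 k z m :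
  m < 2 ^ k -> chase k.+1 z (m + 2 ^ k) = chase k (step k z) m.
Proof.
move=> lt_m; rewrite /= /step_if shr_addn_exp2 //=.
suff low j y : j <= k -> chase j y (m + 2 ^ k) = chase j y m by exact: low.
elim: j y => //= j IHj y lt_jk.
by rewrite /step_if odd_shr_addn_exp2 // IHj // ltnW.
Qed.

Lemma chase_low k z m : m < 2 ^ k -> chase k.+1 z m = chase k z m.
Proof. by move=> lt_m; rewrite /= /step_if divn_small. Qed.

Lemma cosigned_chases0 k : cosigned_chases k 0 = 0.
Proof. by rewrite /cosigned_chases big1 // => m _; rewrite chase0. Qed.

Lemma signed_chases_by_top k z :
  signed_chases k z = \sum_(0 <= a < k) cosigned_chases a (step a z).
Proof.
elim: k z => [|k IHk] z; first by rewrite /signed_chases expn0 big_nat1 big_geq.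
rewrite big_nat_recr // -IHk /signed_chases expnS mul2n -addnn.
rewrite (big_cat_nat (leq0n (2 ^ k)) (leq_addr _ _)); congr (_ + _).
  by apply: eq_big_nat => m /andP [_ lt_m]; rewrite chase_low ?popcount_low.
rewrite -{1}[2 ^ k]add0n big_addn addnK; apply: eq_big_nat => m /andP [_ lt_m].
rewrite chase_addn_exp2 // popcount_addn_exp2 // addn_gt0 expn_gt0 orbT /=.
by case: odd.
Qed.

Lemma cosigned_add_signed k z : 0 < r ->
  cosigned_chases k z + signed_chases k z = (0 < z) %[mod r].
Proof.
move=> r_gt0; rewrite /cosigned_chases /signed_chases -big_split /= big_ltn ?expn_gt0 //.
rewrite chase_set0 popcount0 /= addn0.
suff /dvdnP [q ->] : r %| \sum_(1 <= m < 2 ^ k)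
  ((if 0 < chase k z m then weight (~~ odd (popcount k m)) else 0) +
   (if (0 < m) && (0 < chase k z m) then weight (odd (popcount k m)) else 0)).
  by rewrite addnC modnMDl; case: (0 < z).
rewrite big_nat_cond; apply: dvdn_sum => m /andP [/andP [m_gt0 _] _].
rewrite m_gt0 /weight; case: (0 < _) => //.
by case: odd; rewrite /= ?addn1 ?add1n prednK.
Qed.
End Colouring.

Definition colour (O : nat -> nat -> nat -> nat) (r x : nat) : nat :=
  signed_chases O r (trunc_log 2 x) (trunc_log 2 x) x.+1 %% r.

Section Edge.
Variables (O : nat -> nat -> nat -> nat) (r w n v : nat).
Hypotheses (r_gt0 : 0 < r) (w_gt0 : 0 < w).
Let l := logn 2 w.
Let s := trunc_log 2 w.
Hypothesis lt_nl : n < l.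
Hypotheses (ge_v : 2 ^ n <= v) (lt_v : v < 2 ^ n.+1).
Hypothesis O_nls : O n l s = v.+1.

Lemma exp2_dvd_w a : a <= l -> 2 ^ a %| w.
Proof. by move=> le_al; apply: dvdn_trans (pfactor_dvdnn 2 w); rewrite dvdn_exp2l. Qed.

Lemma odd_shr_w a : a < l -> ~~ odd (w %/ 2 ^ a).
Proof.
move=> lt_al; rewrite -(divnK (exp2_dvd_w lt_al)) expnS mulnA mulnK ?expn_gt0 //.
by rewrite oddM andbF.
Qed.

Lemma v_lt_exp2_l : v < 2 ^ l.
Proof. by apply: leq_trans lt_v _; rewrite leq_exp2l. Qed.

Lemma l_le_s : l <= s.
Proof. exact/trunc_log_max/(dvdn_leq w_gt0 (exp2_dvd_w (leqnn l))). Qed.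

Lemma shr_wv a : a <= l -> (w + v) %/ 2 ^ a = w %/ 2 ^ a + v %/ 2 ^ a.
Proof. by move=> le_al; rewrite divnDl ?exp2_dvd_w. Qed.

Lemma shr_wv_above a : n < a -> (w + v) %/ 2 ^ a = w %/ 2 ^ a.
Proof.
move=> lt_na; case: (leqP a l) => [le_al | lt_la].
  by rewrite shr_wv // (divn_small (leq_trans lt_v _)) ?addn0 // leq_exp2l.
have -> : 2 ^ a = 2 ^ l * 2 ^ (a - l) by rewrite -expnD subnKC // ltnW.
by rewrite !divnMA divnDl ?exp2_dvd_w // (divn_small v_lt_exp2_l) addn0.
Qed.

Lemma step_wv_above a : n < a -> step O s a (w + v).+1 = step O s a w.+1.
Proof. by move=> lt_na; rewrite /step /inner_bit /next_bit /= !shr_wv_above // ltnW. Qed.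

Lemma step_w_below a : a <= n -> step O s a w.+1 = 0.
Proof.
by move=> le_an; rewrite /step /inner_bit /= (negbTE (odd_shr_w (leq_ltn_trans le_an lt_nl))).
Qed.

Lemma step_wv_below a : a < n -> step O s a (w + v).+1 = step O s a v.+1.
Proof.
move=> lt_an; have lt_al : a < l := ltn_trans lt_an lt_nl.
have v_shr_gt0 : 0 < v %/ 2 ^ a.+1.
  by rewrite divn_gt0 ?expn_gt0 //; apply: leq_trans ge_v; rewrite leq_exp2l.
rewrite /step /inner_bit /next_bit /= !shr_wv ?(ltnW lt_al) // oddD.
rewrite (negbTE (odd_shr_w lt_al)) v_shr_gt0 addn_gt0 v_shr_gt0 orbT /=.
rewrite (@logn_addl_dvd 2 (l - a.+1)) //.
  rewrite -(dvdn_pmul2r (expn_gt0 2 a.+1)) divnK ?exp2_dvd_w //.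
  by rewrite -expnD subnK // exp2_dvd_w.
by rewrite ltn_divLR ?expn_gt0 // -expnD subnK // v_lt_exp2_l.
Qed.

Lemma step_wv_n : step O s n (w + v).+1 = v.+1.
Proof.
have v_shr : v %/ 2 ^ n = 1.
  apply/eqP; rewrite eqn_leq leq_divRL ?expn_gt0 // mul1n ge_v andbT.
  by rewrite -ltnS ltn_divLR ?expn_gt0 // -expnS.
rewrite /step /inner_bit /next_bit /= shr_wv ?(ltnW lt_nl) // v_shr addn1 /=.
rewrite (negbTE (odd_shr_w lt_nl)) shr_wv_above //.
rewrite divn_gt0 ?expn_gt0 // (dvdn_leq w_gt0 (exp2_dvd_w lt_nl)) /=.
by rewrite logn_div ?exp2_dvd_w // pfactorK // subnKC // mul1n.
Qed.

Lemma trunc_log_wv : trunc_log 2 (w + v) = s.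
Proof.
apply: trunc_log_eq => //; rewrite (leq_trans (trunc_logP _ w_gt0)) ?leq_addr //=.
have lt_ns : n < s.+1 by rewrite ltnS (leq_trans (ltnW lt_nl) l_le_s).
rewrite -[2 ^ s.+1]mul1n -ltn_divLR ?expn_gt0 // shr_wv_above //.
by rewrite ltn_divLR ?expn_gt0 // mul1n trunc_log_ltn.
Qed.

Lemma colour_edge : colour O r (w + v) = (colour O r w).+1 %[mod r].
Proof.
have lt_ns : n < s := leq_trans lt_nl l_le_s.
rewrite /colour trunc_log_wv -/s modn_mod -[(_ %% r).+1]addn1 modnDml.
rewrite !signed_chases_by_top !(big_cat_nat (leq0n n) (ltnW lt_ns)) /= !(big_ltn lt_ns) /=.
rewrite step_wv_n step_w_below // cosigned_chases0 add0n.
have -> : \sum_(0 <= a < n) cosigned_chases O r s a (step O s a w.+1) = 0.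
  by rewrite big_nat big1 // => a /andP [_ /ltnW/step_w_below ->]; apply: cosigned_chases0.
have -> : \sum_(0 <= a < n) cosigned_chases O r s a (step O s a (w + v).+1) =
          signed_chases O r s n v.+1.
  by rewrite signed_chases_by_top; apply: eq_big_nat => a /andP [_ /step_wv_below ->].
have -> : \sum_(n.+1 <= a < s) cosigned_chases O r s a (step O s a (w + v).+1) =
          \sum_(n.+1 <= a < s) cosigned_chases O r s a (step O s a w.+1).
  by apply: eq_big_nat => a /andP [/step_wv_above -> _].
rewrite addnA [signed_chases _ _ _ _ _ + _]addnC -modnDml cosigned_add_signed //.
by rewrite modnDml add0n addnC.
Qed.
End Edge.

(** * Oracle programs *)

Fixpoint prim_rec (f g : seq nat -> nat) (w : seq nat) (n : nat) : nat :=
  if n is k.+1 then g (k :: prim_rec f g w k :: w) else f w.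

Section Computes.
Variable O : nat -> nat -> nat -> nat.

Definition computes (t : rterm) (f : seq nat -> nat) : Prop := forall v, eval O t v (f v).
Definition computes_all (ts : seq rterm) (fs : seq (seq nat -> nat)) : Prop :=
  forall v, evals O ts v [seq f v | f <- fs].

Lemma computes_zero : computes RZero (fun=> 0).
Proof. by move=> v; constructor. Qed.

Lemma computes_succ : computes RSucc (fun v => (nth 0 v 0).+1).
Proof. by move=> v; constructor. Qed.

Lemma computes_proj i : computes (RProj i) (fun v => nth 0 v i).
Proof. by move=> v; constructor. Qed.

Lemma computes_oracle : computes ROracle (fun v => O (nth 0 v 0) (nth 0 v 1) (nth 0 v 2)).
Proof. by move=> v; constructor. Qed.

Lemma computes_all_nil : computes_all [::] [::].
Proof. by move=> v; constructor. Qed.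

Lemma computes_all_cons t f ts fs :
  computes t f -> computes_all ts fs -> computes_all (t :: ts) (f :: fs).
Proof. by move=> tf tsfs v; constructor. Qed.

Lemma computes_comp t f ts fs :
  computes t f -> computes_all ts fs -> computes (RComp t ts) (fun v => f [seq g v | g <- fs]).
Proof. by move=> tf tsfs v; econstructor. Qed.

Lemma computes_prec t f u g a n ts fs :
  computes t f -> computes u g -> computes a n -> computes_all ts fs ->
  computes (RComp (RPrec t u) (a :: ts)) (fun v => prim_rec f g [seq h v | h <- fs] (n v)).
Proof.
move=> tf ug an tsfs v; econstructor; first by constructor.
by elim: (n v) => [|k IHk] /=; [apply: ePrec0 | apply: ePrecS IHk _].
Qed.

Lemma computes_ext t f g : computes t f -> f =1 g -> computes t g.
Proof. by move=> tf fg v; rewrite -fg. Qed.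
End Computes.

Create HintDb computes.

(* Reads off the function computed by a program from its syntax, using the hint
   database for the programs already verified; the intended function remains to be
   matched against it. *)
Ltac synthesize := eapply computes_ext; [solve [repeat first
  [ solve [eauto 2 with computes] | apply computes_all_nil | apply computes_all_cons
  | apply computes_prec | apply computes_comp | apply computes_proj | apply computes_zero
  | apply computes_succ | apply computes_oracle ]] | ].

Definition rt_add : rterm :=
  RComp (RPrec (RProj 0) (RComp RSucc [:: RProj 1])) [:: RProj 0; RProj 1].

Lemma computes_add O : computes O rt_add (fun v => nth 0 v 0 + nth 0 v 1).
Proof. by rewrite /rt_add; synthesize => v /=; elim: (nth 0 v 0) => //= n ->. Qed.
#[local] Hint Resolve computes_add : computes.

Fixpoint rt_nat (k : nat) : rterm := if k is k'.+1 then RComp RSucc [:: rt_nat k'] else RZero.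

Lemma computes_nat O k : computes O (rt_nat k) (fun=> k).
Proof. by elim: k => [|k IHk] /=; [exact: computes_zero | synthesize]. Qed.
#[local] Hint Resolve computes_nat : computes.

Definition rt_mul : rterm :=
  RComp (RPrec RZero (RComp rt_add [:: RProj 1; RProj 2])) [:: RProj 0; RProj 1].
Definition rt_pred : rterm := RComp (RPrec RZero (RProj 0)) [:: RProj 0].

Lemma computes_mul O : computes O rt_mul (fun v => nth 0 v 0 * nth 0 v 1).
Proof.
rewrite /rt_mul; synthesize => v /=.
by elim: (nth 0 v 0) => //= n ->; rewrite mulSn addnC.
Qed.

Lemma computes_pred O : computes O rt_pred (fun v => (nth 0 v 0).-1).
Proof. by rewrite /rt_pred; synthesize => v /=; case: (nth 0 v 0). Qed.
#[local] Hint Resolve computes_mul computes_pred : computes.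

Definition rt_sub : rterm :=
  RComp (RPrec (RProj 0) (RComp rt_pred [:: RProj 1])) [:: RProj 1; RProj 0].
Definition rt_eq0 : rterm := RComp (RPrec (rt_nat 1) (rt_nat 0)) [:: RProj 0].
Definition rt_pos : rterm := RComp (RPrec (rt_nat 0) (rt_nat 1)) [:: RProj 0].

Lemma computes_sub O : computes O rt_sub (fun v => nth 0 v 0 - nth 0 v 1).
Proof.
rewrite /rt_sub; synthesize => v /=.
by elim: (nth 0 v 1) => /= [|n ->]; rewrite ?subn0 ?subnS.
Qed.

Lemma computes_eq0 O : computes O rt_eq0 (fun v => nth 0 v 0 == 0).
Proof. by rewrite /rt_eq0; synthesize => v /=; case: (nth 0 v 0). Qed.

Lemma computes_pos O : computes O rt_pos (fun v => 0 < nth 0 v 0).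
Proof. by rewrite /rt_pos; synthesize => v /=; case: (nth 0 v 0). Qed.
#[local] Hint Resolve computes_sub computes_eq0 computes_pos : computes.

Definition rt_odd : rterm := RComp (RPrec RZero (RComp rt_eq0 [:: RProj 1])) [:: RProj 0].

Lemma computes_odd O : computes O rt_odd (fun v => odd (nth 0 v 0)).
Proof. by rewrite /rt_odd; synthesize => v /=; elim: (nth 0 v 0) => //= n ->; case: odd. Qed.
#[local] Hint Resolve computes_odd : computes.

Definition rt_half : rterm :=
  RComp (RPrec RZero (RComp rt_add [:: RProj 1; RComp rt_odd [:: RProj 0]])) [:: RProj 0].
Definition rt_exp2 : rterm :=
  RComp (RPrec (rt_nat 1) (RComp rt_add [:: RProj 1; RProj 1])) [:: RProj 0].

Lemma computes_half O : computes O rt_half (fun v => (nth 0 v 0)./2).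
Proof.
rewrite /rt_half; synthesize => v /=.
by elim: (nth 0 v 0) => //= n ->; rewrite uphalf_half addnC.
Qed.

Lemma computes_exp2 O : computes O rt_exp2 (fun v => 2 ^ nth 0 v 0).
Proof.
rewrite /rt_exp2; synthesize => v /=.
by elim: (nth 0 v 0) => //= n ->; rewrite expnS mul2n addnn.
Qed.
#[local] Hint Resolve computes_half computes_exp2 : computes.

Definition rt_shr : rterm :=
  RComp (RPrec (RProj 0) (RComp rt_half [:: RProj 1])) [:: RProj 0; RProj 1].

Lemma computes_shr O : computes O rt_shr (fun v => nth 0 v 1 %/ 2 ^ nth 0 v 0).
Proof.
rewrite /rt_shr; synthesize => v /=.
elim: (nth 0 v 0) => /= [|n ->]; first by rewrite divn1.
by rewrite -divn2 -divnMA expnS mulnC.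
Qed.
#[local] Hint Resolve computes_shr : computes.

Lemma sum_ltn_bound l z : l <= z -> \sum_(0 <= i < z) (i < l) = l.
Proof.
move=> le_lz; rewrite (big_cat_nat (leq0n l) le_lz) /=.
rewrite [X in X + _](eq_big_nat _ _ (F2 := fun=> 1)) => [|i /andP [_ ->]] //.
rewrite [X in _ + X](eq_big_nat _ _ (F2 := fun=> 0)) => [|i /andP [le_li _]].
  by rewrite !sum_nat_const_nat muln1 muln0 subn0 addn0.
by rewrite ltnNge le_li.
Qed.

Lemma sum_exp2_dvdn z : \sum_(0 <= i < z) (2 ^ i.+1 %| z) = logn 2 z.
Proof.
case: z => [|z]; first by rewrite big_geq.
rewrite -[RHS](sum_ltn_bound (ltnW (ltn_logl 2 (ltn0Sn z)))).
by apply: eq_big_nat => i _; rewrite pfactor_dvdn.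
Qed.

Lemma sum_exp2_leq x : \sum_(0 <= i < x) (2 ^ i.+1 <= x) = trunc_log 2 x.
Proof.
case: x => [|x]; first by rewrite big_geq // trunc_log0.
have le_tx : trunc_log 2 x.+1 <= x.+1.
  exact: leq_trans (ltnW (ltn_expl _ (ltnSn 1))) (trunc_logP (ltnSn 1) (ltn0Sn x)).
rewrite -[RHS](sum_ltn_bound le_tx); apply: eq_big_nat => i _; congr nat_of_bool.
apply/idP/idP => [/trunc_log_max -> // | lt_it].
by apply: leq_trans (trunc_logP (ltnSn 1) (ltn0Sn x)); rewrite leq_exp2l.
Qed.

Definition rt_shr_succ : rterm := RComp rt_shr [:: RComp RSucc [:: RProj 0]; RProj 2].

Definition rt_logn2 : rterm := RComp (RPrec RZero (RComp rt_add [:: RProj 1;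
    RComp rt_eq0 [:: RComp rt_sub [:: RProj 2;
      RComp rt_mul [:: RComp rt_exp2 [:: RComp RSucc [:: RProj 0]]; rt_shr_succ]]]]))
  [:: RProj 0; RProj 0].
Definition rt_trunc_log2 : rterm :=
  RComp (RPrec RZero (RComp rt_add [:: RProj 1; RComp rt_pos [:: rt_shr_succ]]))
    [:: RProj 0; RProj 0].

Lemma computes_logn2 O : computes O rt_logn2 (fun v => logn 2 (nth 0 v 0)).
Proof.
rewrite /rt_logn2 /rt_shr_succ; synthesize => v /=.
rewrite -sum_exp2_dvdn; elim: {2 3}(nth 0 v 0) => [|i IHi] /=; first by rewrite big_geq.
by rewrite big_nat_recr //= IHi {2}(divn_eq (nth 0 v 0) (2 ^ i.+1)) mulnC addKn.
Qed.

Lemma computes_trunc_log2 O : computes O rt_trunc_log2 (fun v => trunc_log 2 (nth 0 v 0)).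
Proof.
rewrite /rt_trunc_log2 /rt_shr_succ; synthesize => v /=.
rewrite -sum_exp2_leq; elim: {2 3}(nth 0 v 0) => [|i IHi] /=; first by rewrite big_geq.
by rewrite big_nat_recr //= IHi divn_gt0 ?expn_gt0.
Qed.
#[local] Hint Resolve computes_logn2 computes_trunc_log2 : computes.

(* [chase] with its recursion turned around, so that it becomes a primitive recursion on [j]. *)
Fixpoint chase_prefix (O : nat -> nat -> nat -> nat) (s j z m : nat) : nat :=
  if j is j'.+1 then step_if O s (s - j'.+1) (chase_prefix O s j' z m) m else z.

Lemma chase_prefix_full O s z m : chase O s s z m = chase_prefix O s s z m.
Proof.
suff prefix j : j <= s -> chase O s s z m = chase O s (s - j) (chase_prefix O s j z m) m.
  by rewrite (prefix s) ?subnn.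
elim: j => [|j IHj] lt_js; first by rewrite subn0.
by rewrite IHj ?(ltnW lt_js) // -[s - j](subnSK lt_js).
Qed.

Definition rt_inner_bit : rterm := RComp rt_mul [::
  RComp rt_odd [:: RComp rt_shr [:: RProj 1; RProj 0]];
  RComp rt_pos [:: RComp rt_shr [:: RComp RSucc [:: RProj 1]; RProj 0]]].
Definition rt_next_bit : rterm := RComp rt_add [:: RComp RSucc [:: RProj 1];
  RComp rt_logn2 [:: RComp rt_shr [:: RComp RSucc [:: RProj 1]; RProj 0]]].

Lemma computes_inner_bit O : computes O rt_inner_bit (fun v => inner_bit (nth 0 v 0) (nth 0 v 1)).
Proof. by rewrite /rt_inner_bit; synthesize => v /=; rewrite mulnb. Qed.

Lemma computes_next_bit O : computes O rt_next_bit (fun v => next_bit (nth 0 v 0) (nth 0 v 1)).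
Proof. by rewrite /rt_next_bit; synthesize. Qed.
#[local] Hint Resolve computes_inner_bit computes_next_bit : computes.

Definition rt_step : rterm := RComp rt_mul [::
  RComp rt_inner_bit [:: RComp rt_pred [:: RProj 1]; RProj 0];
  RComp ROracle [:: RProj 0; RComp rt_next_bit [:: RComp rt_pred [:: RProj 1]; RProj 0]; RProj 2]].

Lemma computes_step O : computes O rt_step (fun v => step O (nth 0 v 2) (nth 0 v 0) (nth 0 v 1)).
Proof. by rewrite /rt_step; synthesize. Qed.
#[local] Hint Resolve computes_step : computes.

Definition rt_step_if : rterm :=
  let bit := RComp rt_odd [:: RComp rt_shr [:: RProj 0; RProj 2]] in
  RComp rt_add [:: RComp rt_mul [:: bit; RComp rt_step [:: RProj 0; RProj 1; RProj 3]];
                   RComp rt_mul [:: RComp rt_eq0 [:: bit]; RProj 1]].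

Lemma computes_step_if O :
  computes O rt_step_if (fun v => step_if O (nth 0 v 3) (nth 0 v 0) (nth 0 v 1) (nth 0 v 2)).
Proof.
rewrite /rt_step_if; synthesize => v /=.
by rewrite /step_if; case: odd; rewrite /= ?mul1n ?mul0n ?addn0.
Qed.
#[local] Hint Resolve computes_step_if : computes.

Definition rt_chase : rterm := RComp (RPrec (RComp RSucc [:: RProj 0])
    (RComp rt_step_if [:: RComp rt_sub [:: RProj 4; RComp RSucc [:: RProj 0]];
                          RProj 1; RProj 3; RProj 4]))
  [:: RProj 2; RProj 0; RProj 1; RProj 2].
Definition rt_popcount : rterm := RComp (RPrec RZero
    (RComp rt_add [:: RProj 1; RComp rt_odd [:: RComp rt_shr [:: RProj 0; RProj 2]]]))
  [:: RProj 1; RProj 0].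

Lemma computes_chase O :
  computes O rt_chase (fun v => chase O (nth 0 v 2) (nth 0 v 2) (nth 0 v 0).+1 (nth 0 v 1)).
Proof.
rewrite /rt_chase; synthesize => v /=; rewrite chase_prefix_full.
by elim: {2 4}(nth 0 v 2) => //= j ->.
Qed.

Lemma computes_popcount O : computes O rt_popcount (fun v => popcount (nth 0 v 1) (nth 0 v 0)).
Proof. by rewrite /rt_popcount; synthesize => v /=; elim: (nth 0 v 1) => //= j ->. Qed.
#[local] Hint Resolve computes_chase computes_popcount : computes.

Definition rt_weight (r : nat) : rterm :=
  let parity := RComp rt_odd [:: RProj 0] in
  RComp rt_add [:: parity; RComp rt_mul [:: RComp rt_eq0 [:: parity]; rt_nat r.-1]].

Lemma computes_weight O r : computes O (rt_weight r) (fun v => weight r (odd (nth 0 v 0))).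
Proof.
rewrite /rt_weight; synthesize => v /=.
by rewrite /weight; case: odd; rewrite /= ?mul0n ?mul1n ?addn0.
Qed.
#[local] Hint Resolve computes_weight : computes.

Definition rt_summand (r : nat) : rterm :=
  RComp rt_mul [:: RComp rt_pos [:: RProj 0]; RComp rt_mul [::
    RComp rt_pos [:: RComp rt_chase [:: RProj 1; RProj 0; RProj 2]];
    RComp (rt_weight r) [:: RComp rt_popcount [:: RProj 0; RProj 2]]]].

Lemma computes_summand O r : computes O (rt_summand r) (fun v =>
  if (0 < nth 0 v 0) && (0 < chase O (nth 0 v 2) (nth 0 v 2) (nth 0 v 1).+1 (nth 0 v 0))
  then weight r (odd (popcount (nth 0 v 2) (nth 0 v 0))) else 0).
Proof.
by rewrite /rt_summand; synthesize => v /=; do 2!case: (0 < _); rewrite /= ?mul1n ?mul0n.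
Qed.
#[local] Hint Resolve computes_summand : computes.

Definition rt_signed_chases (r : nat) : rterm := RComp (RPrec RZero
    (RComp rt_add [:: RProj 1; RComp (rt_summand r) [:: RProj 0; RProj 2; RProj 3]]))
  [:: RComp rt_exp2 [:: RProj 1]; RProj 0; RProj 1].

Lemma computes_signed_chases O r : computes O (rt_signed_chases r)
  (fun v => signed_chases O r (nth 0 v 1) (nth 0 v 1) (nth 0 v 0).+1).
Proof.
rewrite /rt_signed_chases; synthesize => v /=; rewrite /signed_chases.
elim: (2 ^ _) => [|m IHm] /=; first by rewrite big_geq.
by rewrite big_nat_recr //= IHm.
Qed.
#[local] Hint Resolve computes_signed_chases : computes.

Definition rt_modn (r : nat) : rterm := RComp (RPrec RZero (RComp rt_mul [::
    RComp RSucc [:: RProj 1]; RComp rt_pos [:: RComp rt_sub [:: rt_nat r.-1; RProj 1]]]))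
  [:: RProj 0].

Lemma computes_modn O r : 0 < r -> computes O (rt_modn r) (fun v => nth 0 v 0 %% r).
Proof.
move=> r_gt0; rewrite /rt_modn; synthesize => v /=.
elim: (nth 0 v 0) => /= [|x ->]; first by rewrite mod0n.
rewrite -[x.+1]addn1 -modnDml subn_gt0.
move: (x %% r) (ltn_pmod x r_gt0) => k lt_kr.
have [lt_k | ge_k] := ltnP k r.-1; first by rewrite muln1 modn_small; lia.
have -> : k + 1 = r by lia.
by rewrite muln0 modnn.
Qed.
#[local] Hint Resolve computes_modn : computes.

Definition rt_colour (r : nat) : rterm :=
  RComp (rt_modn r) [:: RComp (rt_signed_chases r) [:: RProj 0; RComp rt_trunc_log2 [:: RProj 0]]].

Lemma computes_colour O r : 0 < r -> computes O (rt_colour r) (fun v => colour O r (nth 0 v 0)).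
Proof. by move=> r_gt0; rewrite /rt_colour; synthesize => v. Qed.

Theorem corollary3p2 (r : nat) (hr : 1 < r) :
  exists e : rterm,
  forall Q : nat -> nat -> nat -> option nat,
    recursive_domain Q ->
    (forall n k s v, Q n k s = Some v -> inB n v) ->
    exists c : nat -> nat,
      (forall x, c x < r) /\
      (forall x, eval (oracle_of Q) e [:: x] (c x)) /\
      (forall w, 0 < w -> forall n, n < blambda w ->
         forall v, Q n (blambda w) (bmu w) = Some v ->
           c (w + v) = (c w).+1 %[mod r]).
Proof.
have r_gt0 : 0 < r := ltnW hr.
(* The oracle already tells where Q is defined. *)
exists (rt_colour r) => Q _ Q_in_B.
exists (colour (oracle_of Q) r); split; [|split].
- by move=> x; rewrite ltn_pmod.
- by move=> x; apply: computes_colour.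
- move=> w w_gt0 n lt_n v Qv.
  have [v_gt0 mu_v] := Q_in_B _ _ _ _ Qv.
  apply: (@colour_edge _ _ w n v) => //.
  + by rewrite -mu_v (trunc_logP (ltnSn 1) v_gt0).
  + by rewrite -mu_v trunc_log_ltn.
  + by rewrite /oracle_of Qv.
Qed.
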